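(* Let $0<a,b<1$, $f\ge3$, and let $\overline w_{m,n}$ be the array defined in the context. Then for all integers $1\le m<n$, $\overline w_{m,n}=\overline w_{n-1,m-1}$.
   Context: Let $r,y,z$ be indeterminates. For $c\in(0,1)$: $\omega_c:=1-(1-c)^2r^2y^2z^2$, $\tau_c:=1+(1-c)^2r^2z^2y(1-y)$, $x_c:=c^2z^2\tau_c^2$, $\beta_c:=1+z^2(c^2-(1-c)^2r^2(y^2+c^2(1-y)^2z^2))$; $w^*_0(c):=(\beta_c-\omega_c)/x_c$, $w^*_1(c):=1$, $w^*_{n+1}(c):=\beta_cw^*_n(c)-x_cw^*_{n-1}(c)$ ($n\ge1$). Also $\tau(a,b):=1+(1-a)(1-b)r^2z^2y(1-y)$, $x(a,b):=b^2z^2\tau(a,b)^2$, $x(b,a):=a^2z^2\tau(a,b)^2$, $\beta(a,b):=\beta_b-(b-a)b^2(1-b)r^2(1-y)^2z^4$, $\beta(b,a):=\beta_a-(a-b)a^2(1-a)r^2(1-y)^2z^4$. Define $\overline w_{m,m+1}=\overline w_{m+1,m}:=1$ ($m\ge0$), and for $n-m\ge2$ (indices $\ge0$): upward: $\overline w_{m,m+\ell}:=w^*_\ell(a)$ if $m+\ell\le f$, $:=w^*_\ell(b)$ if $f\le m$; $\overline w_{f-\ell,f+1}:=\frac{1-b}{1-a}w^*_{\ell+1}(a)+\frac{b-a}{1-a}w^*_\ell(a)$ ($1\le\ell\le f$); $\overline w_{m,f+2}:=\beta(a,b)\overline w_{m,f+1}-x(a,b)\overline w_{m,f}$ ($m\le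 f-1$); $\overline w_{m,f+j+1}:=\beta_b\overline w_{m,f+j}-x_b\overline w_{m,f+j-1}$ ($m\le f-1$, $j\ge2$). Downward: $\overline w_{m+\ell,m}:=w^*_\ell(a)$ if $m+\ell\le f-1$, $:=w^*_\ell(b)$ if $f-1\le m$; $\overline w_{f+j,f-2}:=\frac{1-a}{1-b}w^*_{j+2}(b)+\frac{a-b}{1-b}w^*_{j+1}(b)$ ($j\ge0$); $\overline w_{n,f-3}:=\beta(b,a)\overline w_{n,f-2}-x(b,a)\overline w_{n,f-1}$ ($n\ge f$); $\overline w_{n,f-\ell-2}:=\beta_a\overline w_{n,f-\ell-1}-x_a\overline w_{n,f-\ell}$ ($n\ge f$, $\ell\ge2$). *)

(* polynomial identities in the indeterminates r, y, z over a
   real field, computed in the field of rational functions R(r,y,z). *)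
From HB Require Import structures.
From mathcomp Require Import all_boot all_order all_algebra.
From mathcomp Require Import fraction.
From mathcomp Require Import mpoly.
Set Implicit Arguments. Unset Strict Implicit. Unset Printing Implicit Defensive.
Import Order.TTheory GRing.Theory Num.Theory.
Local Open Scope ring_scope.

Definition RF (R : realFieldType) := {fraction {mpoly R[3]}}.

Definition cst (R : realFieldType) (c : R) : RF R := tofrac (c%:MP).
Definition var_r (R : realFieldType) : RF R := tofrac ('X_(@Ordinal 3 0 isT)).
Definition var_y (R : realFieldType) : RF R := tofrac ('X_(@Ordinal 3 1 isT)).
Definition var_z (R : realFieldType) : RF R := tofrac ('X_(@Ordinal 3 2 isT)).

Section Defs.
Variable R : realFieldType.
Local Notation K := (RF R).
Local Notation "c %:C" := (cst c) (at level 2, format "c %:C").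
Local Notation r := (var_r R).
Local Notation y := (var_y R).
Local Notation z := (var_z R).

Definition omega (c : R) : K := 1 - ((1 - c) ^+ 2)%:C * r ^+ 2 * y ^+ 2 * z ^+ 2.
Definition tau (c : R) : K := 1 + ((1 - c) ^+ 2)%:C * r ^+ 2 * z ^+ 2 * y * (1 - y).
Definition xc (c : R) : K := (c ^+ 2)%:C * z ^+ 2 * tau c ^+ 2.
Definition beta (c : R) : K :=
  1 + z ^+ 2 * ((c ^+ 2)%:C - ((1 - c) ^+ 2)%:C * r ^+ 2 *
                  (y ^+ 2 + (c ^+ 2)%:C * (1 - y) ^+ 2 * z ^+ 2)).

(* wstar_pair c n = (w*_n(c), w*_{n+1}(c)) *)
Fixpoint wstar_pair (c : R) (n : nat) : K * K :=
  match n with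
  | 0%N => ((beta c - omega c) / xc c, 1)
  | S k => let p := wstar_pair c k in (p.2, beta c * p.2 - xc c * p.1)
  end.
Definition wstar (c : R) (n : nat) : K := (wstar_pair c n).1.

Definition tau2 (a b : R) : K :=
  1 + ((1 - a) * (1 - b))%:C * r ^+ 2 * z ^+ 2 * y * (1 - y).
Definition x_ab (a b : R) : K := (b ^+ 2)%:C * z ^+ 2 * tau2 a b ^+ 2.
Definition x_ba (a b : R) : K := (a ^+ 2)%:C * z ^+ 2 * tau2 a b ^+ 2.
Definition beta_ab (a b : R) : K :=
  beta b - ((b - a) * b ^+ 2 * (1 - b))%:C * r ^+ 2 * (1 - y) ^+ 2 * z ^+ 4.
Definition beta_ba (a b : R) : K :=
  beta a - ((a - b) * a ^+ 2 * (1 - a))%:C * r ^+ 2 * (1 - y) ^+ 2 * z ^+ 4.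

(* Upward part, case m <= f-1 < f+1 <= n.
   wup_col a b f m k = wbar_{m, f+1+k}. *)
Fixpoint wup_col (a b : R) (f m k : nat) : K :=
  match k with
  | 0%N => ((1 - b) / (1 - a))%:C * wstar a (f - m).+1
           + ((b - a) / (1 - a))%:C * wstar a (f - m)
  | S k1 =>
    match k1 with
    | 0%N => beta_ab a b * wup_col a b f m k1
             - x_ab a b * (if m.+1 == f then 1 else wstar a (f - m))
    | S k2 => beta b * wup_col a b f m k1 - xc b * wup_col a b f m k2
    end
  end.

Definition wup (a b : R) (f m n : nat) : K :=
  if n == m.+1 then 1
  else if (n <= f)%N then wstar a (n - m)
  else if (f <= m)%N then wstar b (n - m)
  else wup_col a b f m (n - f.+1).

(* Downward part, case m <= f-2 and f <= n.
   wdown_col a b f n k = wbar_{n, f-2-k}. *)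
Fixpoint wdown_col (a b : R) (f n k : nat) : K :=
  match k with
  | 0%N => ((1 - a) / (1 - b))%:C * wstar b (n - f).+2
           + ((a - b) / (1 - b))%:C * wstar b (n - f).+1
  | S k1 =>
    match k1 with
    | 0%N => beta_ba a b * wdown_col a b f n k1
             - x_ba a b * (if n == f then 1 else wstar b (n - f).+1)
    | S k2 => beta a * wdown_col a b f n k1 - xc a * wdown_col a b f n k2
    end
  end.

Definition wdown (a b : R) (f n m : nat) : K :=
  if n == m.+1 then 1
  else if (n <= f.-1)%N then wstar a (n - m)
  else if (f.-1 <= m)%N then wstar b (n - m)
  else wdown_col a b f n (f - 2 - m).

(* The full array wbar_{m,n}; the diagonal m = n is not defined in the paper
   and is set to 0 here (it never occurs in the statement). *)
Definition wbar (a b : R) (f m n : nat) : K :=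
  if (m < n)%N then wup a b f m n
  else if (n < m)%N then wdown a b f m n
  else 0.

End Defs.

From Pilot Require Import Defs.
From HB Require Import structures.
From mathcomp Require Import all_boot all_order all_algebra.
From mathcomp Require Import fraction mpoly.
From mathcomp Require Import ring zify.
Set Implicit Arguments.
Unset Strict Implicit.
Unset Printing Implicit Defensive.
Import Order.TTheory GRing.Theory Num.Theory.
Local Open Scope ring_scope.

(* In the region m < f < n both sides of the identity are entries of a
   two-parameter family indexed by the distances l = f-1-m and j = n-1-f to
   the crossing column f+1: the left side satisfies the recurrence of w*(a) in
   l and that of w*(b) in j, and so does the right side, with the roles of a
   and b exchanged.  Two such families agree as soon as they agree for
   l, j in {0, 1}, and these four corner values are identities between
   explicit rational functions.  Outside that region both sides are the same
   w*_(n-m). *)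

Section LinearRecurrence.
Variable K : comNzRingType.

Definition linrec2 (be x : K) (s : nat -> K) :=
  forall i, s i.+2 = be * s i.+1 - x * s i.

Lemma eq_linrec2 be x s t :
  linrec2 be x s -> linrec2 be x t -> s 0%N = t 0%N -> s 1%N = t 1%N -> s =1 t.
Proof.
move=> Hs Ht e0 e1; suff st i : s i = t i /\ s i.+1 = t i.+1 by move=> i; case: (st i).
by elim: i => [|i [ei ei1]] //; rewrite Hs Ht ei ei1.
Qed.

Fixpoint linrec2_pair (be x u0 u1 : K) n : K * K :=
  if n is n'.+1 then
    let p := linrec2_pair be x u0 u1 n' in (p.2, be * p.2 - x * p.1)
  else (u0, u1).

Definition linrec2_seq be x u0 u1 n := (linrec2_pair be x u0 u1 n).1.

Lemma linrec2_seq0 be x u0 u1 : linrec2_seq be x u0 u1 0 = u0.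
Proof. by []. Qed.

Lemma linrec2_seq1 be x u0 u1 : linrec2_seq be x u0 u1 1 = u1.
Proof. by []. Qed.

Lemma linrec2_seqP be x u0 u1 : linrec2 be x (linrec2_seq be x u0 u1).
Proof. by []. Qed.

(* The solution is linear in its initial values. *)
Lemma linrec2_seq_rows be x be' x' (u0 u1 : nat -> K) j :
  linrec2 be' x' u0 -> linrec2 be' x' u1 ->
  linrec2 be' x' (fun l => linrec2_seq be x (u0 l) (u1 l) j).
Proof.
move=> H0 H1.
suff Hj : linrec2 be' x' (fun l => linrec2_seq be x (u0 l) (u1 l) j) /\
          linrec2 be' x' (fun l => linrec2_seq be x (u0 l) (u1 l) j.+1).
  by case: Hj.
elim: j => [|j [Hj Hj1]] //; split=> // i.
by rewrite !linrec2_seqP Hj Hj1; ring.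
Qed.

Lemma eq_linrec2_grid be1 x1 be2 x2 (U V : nat -> nat -> K) :
  (forall j, linrec2 be1 x1 (U^~ j)) -> (forall l, linrec2 be2 x2 (U l)) ->
  (forall j, linrec2 be1 x1 (V^~ j)) -> (forall l, linrec2 be2 x2 (V l)) ->
  U 0%N 0%N = V 0%N 0%N -> U 1%N 0%N = V 1%N 0%N ->
  U 0%N 1%N = V 0%N 1%N -> U 1%N 1%N = V 1%N 1%N ->
  forall l j, U l j = V l j.
Proof.
move=> U1 U2 V1 V2 e00 e10 e01 e11 l.
have col0 := eq_linrec2 (U1 0%N) (V1 0%N) e00 e10.
have col1 := eq_linrec2 (U1 1%N) (V1 1%N) e01 e11.
exact: (eq_linrec2 (U2 l) (V2 l) (col0 l) (col1 l)).
Qed.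

End LinearRecurrence.

(* The coefficients of Defs over an arbitrary field, with [c%:C] replaced by
   [c]: the corner identities are checked by [field] in this generality,
   which is impractical on the concrete field [RF R]. *)
Section Crossing.
Variables (F : fieldType) (r y z : F).

Definition omegaF (c : F) := 1 - (1 - c) ^+ 2 * r ^+ 2 * y ^+ 2 * z ^+ 2.
Definition betaF (c : F) :=
  1 + z ^+ 2 * (c ^+ 2 - (1 - c) ^+ 2 * r ^+ 2 * (y ^+ 2 + c ^+ 2 * (1 - y) ^+ 2 * z ^+ 2)).
Definition xcF (c : F) :=
  c ^+ 2 * z ^+ 2 * (1 + (1 - c) ^+ 2 * r ^+ 2 * z ^+ 2 * y * (1 - y)) ^+ 2.
Definition beta_abF (a b : F) :=
  betaF b - (b - a) * b ^+ 2 * (1 - b) * r ^+ 2 * (1 - y) ^+ 2 * z ^+ 4.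
Definition x_abF (a b : F) :=
  b ^+ 2 * z ^+ 2 * (1 + (1 - a) * (1 - b) * r ^+ 2 * z ^+ 2 * y * (1 - y)) ^+ 2.

Definition cross0 (a b u v : F) := (1 - b) / (1 - a) * v + (b - a) / (1 - a) * u.
Definition cross1 (a b u v : F) := beta_abF a b * cross0 a b u v - x_abF a b * u.

Lemma linrec2_cross0 be x a b s :
  linrec2 be x s -> linrec2 be x (fun l => cross0 a b (s l.+1) (s l.+2)).
Proof. by move=> Hs i; rewrite /cross0 !Hs; ring. Qed.

Lemma linrec2_cross1 be x a b s :
  linrec2 be x s -> linrec2 be x (fun l => cross1 a b (s l.+1) (s l.+2)).
Proof. by move=> Hs i; rewrite /cross1 /cross0 !Hs; ring. Qed.

Variables (a b : F).
Hypotheses (a_neq1 : a != 1) (b_neq1 : b != 1).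
Let wa3 := betaF a * omegaF a - xcF a.
Let wb3 := betaF b * omegaF b - xcF b.

Lemma cross00 : cross0 a b 1 (omegaF a) = cross0 b a 1 (omegaF b).
Proof.
rewrite /cross0 /omegaF; field.
by rewrite !subr_eq0 ![1 == _]eq_sym a_neq1 b_neq1.
Qed.

Lemma cross10 : cross0 a b (omegaF a) wa3 = cross1 b a 1 (omegaF b).
Proof.
rewrite /cross1 /cross0 /wa3 /beta_abF /x_abF /betaF /xcF /omegaF; field.
by rewrite !subr_eq0 ![1 == _]eq_sym a_neq1 b_neq1.
Qed.

Lemma cross11 : cross1 a b (omegaF a) wa3 = cross1 b a (omegaF b) wb3.
Proof.
rewrite /cross1 /cross0 /wa3 /wb3 /beta_abF /x_abF /betaF /xcF /omegaF; field.
by rewrite !subr_eq0 ![1 == _]eq_sym a_neq1 b_neq1.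
Qed.

End Crossing.

HB.instance Definition _ (R : realFieldType) :=
  GRing.RMorphism.copy (@cst R) (@tofrac {mpoly R[3]} \o (@mpolyC 3 R)).

Local Notation "c %:C" := (cst c) (at level 2, format "c %:C").

Section RationalFunctions.
Variable R : realFieldType.
Local Notation r := (var_r R).
Local Notation y := (var_y R).
Local Notation z := (var_z R).

Lemma omegaE (c : R) : omega c = omegaF r y z c%:C.
Proof. by rewrite /omega /omegaF !(rmorphB, rmorphXn, rmorph1). Qed.

Lemma betaE (c : R) : beta c = betaF r y z c%:C.
Proof. by rewrite /beta /betaF !(rmorphB, rmorphXn, rmorph1). Qed.

Lemma xcE (c : R) : xc c = xcF r y z c%:C.
Proof. by rewrite /xc /tau /xcF !(rmorphB, rmorphXn, rmorph1). Qed.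

Lemma beta_abE (a b : R) : beta_ab a b = beta_abF r y z a%:C b%:C.
Proof. by rewrite /beta_ab /beta_abF betaE !(rmorphB, rmorphM, rmorphXn, rmorph1). Qed.

Lemma x_abE (a b : R) : x_ab a b = x_abF r y z a%:C b%:C.
Proof. by rewrite /x_ab /tau2 /x_abF !(rmorphB, rmorphM, rmorphXn, rmorph1). Qed.

Lemma x_baE (a b : R) : x_ba a b = x_abF r y z b%:C a%:C.
Proof.
by rewrite /x_ba /tau2 /x_abF !(rmorphB, rmorphM, rmorphXn, rmorph1) [(1 - b%:C) * _]mulrC.
Qed.

Lemma tofrac_neq0_meval (p : {mpoly R[3]}) v : p.@[v] != 0 -> tofrac p != 0.
Proof. by apply: contra; rewrite tofrac_eq0 => /eqP->; rewrite meval0. Qed.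

Lemma var_z_neq0 : z != 0.
Proof. by apply: (@tofrac_neq0_meval _ (fun=> 1)); rewrite mevalXU oner_neq0. Qed.

Lemma tau_neq0 (c : R) : tau c != 0.
Proof.
have -> : tau c = tofrac (1 + ((1 - c) ^+ 2)%:MP * 'X_(@Ordinal 3 0 isT) ^+ 2 *
    'X_(@Ordinal 3 2 isT) ^+ 2 * 'X_(@Ordinal 3 1 isT) * (1 - 'X_(@Ordinal 3 1 isT))).
  by rewrite /tau !(rmorphB, rmorphD, rmorphM, rmorphXn, rmorph1).
apply: (@tofrac_neq0_meval _ (fun=> 0)).
by rewrite mevalD meval1 mevalM mevalB meval1 mevalM mevalXU !(mulr0, mul0r) addr0 oner_neq0.
Qed.

Lemma xc_neq0 (c : R) : c != 0 -> xc c != 0.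
Proof.
move=> c_neq0; rewrite /xc.
apply: mulf_neq0; last exact: expf_neq0 (tau_neq0 c).
apply: mulf_neq0; last exact: expf_neq0 var_z_neq0.
by rewrite fmorph_eq0 expf_neq0.
Qed.

Lemma wstar_rec (c : R) : linrec2 (beta c) (xc c) (wstar c).
Proof. by []. Qed.

Lemma wstar1 (c : R) : wstar c 1 = 1.
Proof. by []. Qed.

Lemma wstar2 (c : R) : c != 0 -> wstar c 2 = omega c.
Proof.
move=> c_neq0; rewrite wstar_rec /wstar /= mulr1 mulrCA mulfV ?xc_neq0 //.
by rewrite mulr1 opprB addrC subrK.
Qed.

Lemma wstar3 (c : R) : c != 0 -> wstar c 3 = beta c * omega c - xc c.
Proof. by move=> c_neq0; rewrite wstar_rec wstar2 // mulr1. Qed.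

(* [wcol a b l j] is wbar_(f-1-l, f+1+j) and [wcol b a j l] is
   wbar_(f+j, f-2-l). *)
Definition wcol (a b : R) l j :=
  linrec2_seq (beta b) (xc b) (cross0 a%:C b%:C (wstar a l.+1) (wstar a l.+2))
    (cross1 r y z a%:C b%:C (wstar a l.+1) (wstar a l.+2)) j.

Lemma wcol_cols (a b : R) l : linrec2 (beta b) (xc b) (wcol a b l).
Proof. exact: linrec2_seqP. Qed.

Lemma wcol_rows (a b : R) j : linrec2 (beta a) (xc a) (wcol a b ^~ j).
Proof.
by apply: linrec2_seq_rows; [apply: linrec2_cross0 | apply: linrec2_cross1];
  apply: wstar_rec.
Qed.

Lemma wup_colE (a b : R) f m k :
  (m < f)%N -> wup_col a b f m k = wcol a b (f - m).-1 k.
Proof.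
move=> lt_mf; have Efm : (f - m)%N = (f - m).-1.+1 by lia.
apply: (@eq_linrec2 _ (beta b) (xc b)); [by move=> i | exact: wcol_cols | | ].
- by rewrite /wcol linrec2_seq0 -Efm /= /cross0 !(fmorph_div, rmorphB, rmorph1).
- rewrite /wcol linrec2_seq1 -Efm /= /cross1 /cross0 beta_abE x_abE.
  rewrite !(fmorph_div, rmorphB, rmorph1).
  by case: eqP => // Ef; rewrite (_ : (f - m = 1)%N) //; lia.
Qed.

Lemma wdown_colE (a b : R) f n k : wdown_col a b f n k = wcol b a (n - f) k.
Proof.
apply: (@eq_linrec2 _ (beta a) (xc a)); [by move=> i | exact: wcol_cols | | ].
- by rewrite /wcol linrec2_seq0 /= /cross0 !(fmorph_div, rmorphB, rmorph1).
- rewrite /wcol linrec2_seq1 /= /cross1 /cross0 (beta_abE b a : beta_ba a b = _) x_baE.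
  rewrite !(fmorph_div, rmorphB, rmorph1).
  by case: eqP => // ->; rewrite subnn.
Qed.

Section Corners.
Variables (a b : R).
Hypotheses (a_neq0 : a != 0) (b_neq0 : b != 0) (a_neq1 : a != 1) (b_neq1 : b != 1).

Let Ca_neq1 : a%:C != 1. Proof. by rewrite fmorph_eq1. Qed.
Let Cb_neq1 : b%:C != 1. Proof. by rewrite fmorph_eq1. Qed.

Lemma wcol00 : wcol a b 0 0 = wcol b a 0 0.
Proof.
rewrite /wcol !linrec2_seq0 !wstar1 (wstar2 a_neq0) (wstar2 b_neq0) !omegaE.
exact: (cross00 r y z Ca_neq1 Cb_neq1).
Qed.

Lemma wcol10 : wcol a b 1 0 = wcol b a 0 1.
Proof.
rewrite /wcol linrec2_seq0 linrec2_seq1 wstar1 (wstar3 a_neq0).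
rewrite (wstar2 a_neq0) (wstar2 b_neq0) !omegaE betaE xcE.
exact: (cross10 r y z Ca_neq1 Cb_neq1).
Qed.

Lemma wcol11 : wcol a b 1 1 = wcol b a 1 1.
Proof.
rewrite /wcol !linrec2_seq1 (wstar3 a_neq0) (wstar3 b_neq0).
rewrite (wstar2 a_neq0) (wstar2 b_neq0) !omegaE !betaE !xcE.
exact: (cross11 r y z Ca_neq1 Cb_neq1).
Qed.

End Corners.

Lemma wcolC (a b : R) : a != 0 -> b != 0 -> a != 1 -> b != 1 ->
  forall l j, wcol a b l j = wcol b a j l.
Proof.
move=> a_neq0 b_neq0 a_neq1 b_neq1.
apply: (@eq_linrec2_grid _ _ _ _ _ (wcol a b) (fun l j => wcol b a j l)).
- exact: wcol_rows.
- exact: wcol_cols.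
- by move=> j; apply: wcol_cols.
- by move=> l; apply: wcol_rows.
- exact: wcol00.
- exact: wcol10.
- exact: esym (wcol10 b_neq0 a_neq0 b_neq1 a_neq1).
- exact: wcol11.
Qed.

End RationalFunctions.

Theorem lemma2 (R : realFieldType) (a b : R) (f : nat) :
  0 < a < 1 -> 0 < b < 1 -> (3 <= f)%N ->
  forall m n : nat, (1 <= m)%N -> (m < n)%N ->
    wbar a b f m n = wbar a b f n.-1 m.-1.
Proof.
move=> /andP[a_gt0 a_lt1] /andP[b_gt0 b_lt1] f_ge3 m n m_ge1 lt_mn.
have lt_mn1 : (m.-1 < n.-1)%N by lia.
rewrite /wbar lt_mn ltnNge (ltnW lt_mn1) lt_mn1 /wup /wdown.
rewrite (_ : (n.-1 == m.-1.+1) = (n == m.+1)); last by lia.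
rewrite (_ : (n.-1 <= f.-1)%N = (n <= f)%N); last by lia.
rewrite (_ : (f.-1 <= m.-1)%N = (f <= m)%N); last by lia.
rewrite (_ : (n.-1 - m.-1 = n - m)%N); last by lia.
case: eqP => // n_neq_mS; case: (leqP n f) => // lt_fn; case: (leqP f m) => // lt_mf.
have [a_neq0 b_neq0] : a != 0 /\ b != 0 by rewrite !lt0r_neq0.
have [a_neq1 b_neq1] : a != 1 /\ b != 1 by rewrite !lt_eqF.
rewrite wup_colE // wdown_colE wcolC //.
by congr wcol; lia.
Qed.
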